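(* Let $(M,f,g)$ be an $(m,n)$-hypermodule over a commutative Krasner $(m,n)$-hyperring $(R,f',g')$ with scalar identity $1$, and let $Q$ be an $n$-ary weakly classical prime subhypermodule of $M$. Then for all $r_1,\dots,r_{n-1}\in R$ and $a\in M$, $$Q_{g(r_1^{n-1},a)}\subseteq F_{g(r_1^{n-1},a)}\cup Q_{g(r_1,1^{(n-2)},a)}\cup\cdots\cup Q_{g(r_{n-1},1^{(n-2)},a)}.$$
   Context: A commutative Krasner $(m,n)$-hyperring with scalar identity $1$ is a triple $(R,f',g')$ where $(R,f')$ is a canonical $m$-ary hypergroup with zero $0$, $(R,g')$ is a commutative $n$-ary semigroup, $g'$ is distributive over $f'$, $0$ is a zero element for $g'$, and $g'(x,1^{(n-1)})=x$. Notation: $x_i^j$ denotes $x_i,\dots,x_j$ and $x^{(k)}$ denotes $x$ repeated $k$ times. An $(m,n)$-hypermodule over $R$ is a triple $(M,f,g)$ with $(M,f)$ a canonical $m$-ary hypergroup with zero $0$ and $g:R^{n-1}\times M\to P^*(M)$ satisfying: $g(r_1^{n-1},f(x_1^m))=f(g(r_1^{n-1},x_1),\dots,g(r_1^{n-1},x_m))$; $g(r_1^{i-1},f'(s_1^m),r_{i+1}^{n-1},x)=f(g(r_1^{i-1},s_1,r_{i+1}^{n-1},x),\dots,g(r_1^{i-1},s_m,r_{i+1}^{n-1},x))$; $g(r_1^{i-1},g'(r_i^{i+n-1}),r_{i+n}^{2n-2},x)=g(r_1^{n-1},g(r_n^{2n-2},x))$; $g(r_1^{i-1},0,r_{i+1}^{n-1},x)=\{0\}$;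 moreover $g(1^{(n-1)},a)=\{a\}$. For subsets, $g(A_1,\dots,A_{n-1},X)$ is the union of $g(r_1^{n-1},x)$ over $r_i\in A_i$, $x\in X$. A subhypermodule is a nonempty $N\subseteq M$ with $(N,f)$ an $m$-ary subhypergroup and $g(R^{(n-1)},N)\subseteq N$. A proper subhypermodule $Q$ is $n$-ary weakly classical prime if for $r_1^{n-1}\in R$, $a\in M$, $0\notin g(r_1^{n-1},a)\subseteq Q$ implies $g(r_i,1^{(n-2)},a)\subseteq Q$ for some $1\le i\le n-1$. For a nonempty $X\subseteq M$ and a subhypermodule $Q$: $Q_X=\{r\in R: g(r,1^{(n-2)},X)\subseteq Q\}$ and $F_X=\{r\in R: r\neq0,\ 0\in g(r,1^{(n-2)},X)\}$. *)

From mathcomp Require Import all_boot.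
From mathcomp Require Import fingroup perm.


(* Indices are 0-based throughout: a k-tuple is a function 'I_k -> T. *)

Definition tup {T : Type} (k : nat) (s : nat -> T) : 'I_k -> T :=
  fun i => s (nat_of_ord i).

Definition upd {T : Type} {k : nat} (s : 'I_k -> T) (i : nat) (y : T) : 'I_k -> T :=
  fun j => if nat_of_ord j == i then y else s j.

Definition seteq {T : Type} (A B : T -> Prop) : Prop := forall x, A x <-> B x.
Definition subs {T : Type} (A B : T -> Prop) : Prop := forall x, A x -> B x.

Definition hop (T : Type) (m : nat) := ('I_m -> T) -> T -> Prop.

Definition hlift {T : Type} {m : nat} (f : hop T m) (A : 'I_m -> T -> Prop) : T -> Prop :=
  fun x => exists s : 'I_m -> T, (forall i, A i (s i)) /\ f s x.

(* position-i insertion of a value y into a sequence of length 2m-1,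
   replacing the block s_i .. s_(i+m-1) *)
Definition ins {T : Type} (m i : nat) (y : T) (s : nat -> T) : nat -> T :=
  fun k => if k < i then s k else if k == i then y else s (k + m).-1.

(* f(s_0^(i-1), f(s_i^(i+m-1)), s_(i+m)^(2m-2)) *)
Definition assoc_at {T : Type} (m : nat) (f : hop T m) (i : nat) (s : nat -> T) : T -> Prop :=
  fun x => exists y, f (tup m (fun k => s (i + k))) y /\ f (tup m (ins m i y s)) x.

Definition hyper_assoc {T : Type} (m : nat) (f : hop T m) : Prop :=
  forall (s : nat -> T) (i j : nat), i < m -> j < m ->
    seteq (assoc_at m f i s) (assoc_at m f j s).

Definition const_tup {T : Type} (k : nat) (z : T) : 'I_k -> T := fun _ => z.

Definition pair_tup {T : Type} (m : nat) (z a b : T) : 'I_m -> T :=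
  upd (upd (const_tup m z) 0 a) 1 b.

Definition canonical_hypergroup {T : Type} (m : nat) (f : hop T m) (z : T) : Prop :=
  (forall s, exists x, f s x) /\
  hyper_assoc m f /\
  (forall (s : 'I_m -> T) (i : 'I_m) (x : T), exists y, f (upd s i y) x) /\
  (forall (s : 'I_m -> T) (sg : {perm 'I_m}), seteq (f s) (f (fun k => s (sg k)))) /\
  (forall x, seteq (f (upd (const_tup m z) 0 x)) (eq x)) /\
  (forall e, (forall x, seteq (f (upd (const_tup m e) 0 x)) (eq x)) -> e = z) /\
  (forall x, exists! y, f (pair_tup m z x y) z) /\
  (* reversibility: x in f(x_1^m) implies x_i in f(-x_1,..,x,..,-x_m)
     (x at position i; the order of arguments is irrelevant by commutativity) *)
  (forall (s : 'I_m -> T) (x : T), f s x ->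
     forall inv : 'I_m -> T, (forall j, f (pair_tup m z (s j) (inv j)) z) ->
     forall i : 'I_m, f (upd inv i x) (s i)).

Definition ins_op {T : Type} (n i : nat) (g : ('I_n -> T) -> T) (s : nat -> T) : nat -> T :=
  ins n i (g (tup n (fun k => s (i + k)))) s.

Definition commutative_nary_semigroup {T : Type} (n : nat) (g : ('I_n -> T) -> T) : Prop :=
  (forall (s : nat -> T) (i j : nat), i < n -> j < n ->
     g (tup n (ins_op n i g s)) = g (tup n (ins_op n j g s))) /\
  (forall (s : 'I_n -> T) (sg : {perm 'I_n}), g s = g (fun k => s (sg k))).

Definition krasner_hyperring {R : Type} (m n : nat) (f' : hop R m)
    (g' : ('I_n -> R) -> R) (z one : R) : Prop :=
  [/\ canonical_hypergroup m f' z,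
      commutative_nary_semigroup n g',
      forall (a : 'I_n -> R) (i : 'I_n) (x : 'I_m -> R),
        seteq (fun y => exists u, f' x u /\ y = g' (upd a i u))
              (f' (fun k => g' (upd a i (x k)))),
      forall (a : 'I_n -> R) (i : 'I_n), g' (upd a i z) = z &
      forall x, g' (upd (const_tup n one) 0 x) = x].

Definition glift {R M : Type} {k : nat} (g : ('I_k -> R) -> M -> M -> Prop)
    (r : 'I_k -> R) (X : M -> Prop) : M -> Prop :=
  fun y => exists x, X x /\ g r x y.

Definition ins_scal {R : Type} (n : nat) (g' : ('I_n -> R) -> R) (i : nat) (s : nat -> R)
  : 'I_n.-1 -> R := tup n.-1 (ins_op n i g' s).

Definition hypermodule {R M : Type} (m n : nat) (f' : hop R m) (g' : ('I_n -> R) -> R)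
    (zR oneR : R) (f : hop M m) (g : ('I_n.-1 -> R) -> M -> M -> Prop) (zM : M) : Prop :=
  canonical_hypergroup m f zM /\
  (forall r x, exists y, g r x y) /\
  (forall (r : 'I_n.-1 -> R) (x : 'I_m -> M),
     seteq (glift g r (f x)) (hlift f (fun k => g r (x k)))) /\
  (forall (r : 'I_n.-1 -> R) (i : 'I_n.-1) (s : 'I_m -> R) (x : M),
     seteq (fun y => exists u, f' s u /\ g (upd r i u) x y)
           (hlift f (fun k => g (upd r i (s k)) x))) /\
  (* g(r_1^(i-1), g'(r_i^(i+n-1)), r_(i+n)^(2n-2), x) = g(r_1^(n-1), g(r_n^(2n-2), x)),
     0-based indices: s_0 .. s_(2n-3) *)
  (forall (s : nat -> R) (i : nat), i < n.-1 -> forall x : M,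
     seteq (g (ins_scal n g' i s) x)
           (glift g (tup n.-1 s) (g (tup n.-1 (fun k => s (n.-1 + k))) x))) /\
  (forall (r : 'I_n.-1 -> R) (i : 'I_n.-1) (x : M), seteq (g (upd r i zR) x) (eq zM)) /\
  (forall a : M, seteq (g (const_tup n.-1 oneR) a) (eq a)).

Definition subhypermodule {R M : Type} (m n : nat) (f : hop M m)
    (g : ('I_n.-1 -> R) -> M -> M -> Prop) (N : M -> Prop) : Prop :=
  [/\ exists x, N x,
      forall s : 'I_m -> M, (forall i, N (s i)) -> subs (f s) N,
      (* reproduction inside N: (N,f) is an m-ary hypergroup *)
      forall (s : 'I_m -> M) (i : 'I_m) (x : M), (forall j, N (s j)) -> N x ->
        exists y, N y /\ f (upd s i y) x &
      forall (r : 'I_n.-1 -> R) (x : M), N x -> subs (g r x) N].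

Definition scal1 {R : Type} (n : nat) (oneR r : R) : 'I_n.-1 -> R :=
  upd (const_tup n.-1 oneR) 0 r.

Definition weakly_classical_prime {R M : Type} (m n : nat) (oneR : R) (f : hop M m)
    (g : ('I_n.-1 -> R) -> M -> M -> Prop) (zM : M) (Q : M -> Prop) : Prop :=
  [/\ subhypermodule m n f g Q,
      (exists x, ~ Q x) &
      forall (r : 'I_n.-1 -> R) (a : M), ~ g r a zM -> subs (g r a) Q ->
        exists i : 'I_n.-1, subs (g (scal1 n oneR (r i)) a) Q].

Definition Qset {R M : Type} (n : nat) (oneR : R) (g : ('I_n.-1 -> R) -> M -> M -> Prop)
    (Q : M -> Prop) (X : M -> Prop) : R -> Prop :=
  fun r => subs (glift g (scal1 n oneR r) X) Q.

Definition Fset {R M : Type} (n : nat) (zR oneR : R) (g : ('I_n.-1 -> R) -> M -> M -> Prop)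
    (zM : M) (X : M -> Prop) : R -> Prop :=
  fun r => r <> zR /\ glift g (scal1 n oneR r) X zM.

From mathcomp Require Import all_boot.
From mathcomp Require Import fingroup perm.
From mathcomp Require Import zify.
From Stdlib Require Import Classical FunctionalExtensionality.

(* Let s be in Q_{g(r,a)}.  If s = 0 it lies in every Q_X, and if
   0 is in g(s,1^(n-2),g(r,a)) it lies in F.  Otherwise associativity
   rewrites g(s,1^(n-2),g(r,a)) as g(r',a) with
   r' = (g'(s,1^(n-2),r_1), r_2, ..., r_(n-1)), and weak classical primality
   gives an i with g(r'_i,1^(n-2),a) in Q.  For i = 1, associativity read
   backwards turns this into s in Q_{g(r_1,1^(n-2),a)}; for i > 1, r'_i = r_i,
   so g(r_i,1^(n-2),a) lies in Q and Q is closed under the action. *)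

Section ScalarConcat.
Variables (T : Type) (k : nat) (x0 : T).

Definition scal_cat (t r : 'I_k -> T) : nat -> T :=
  nth x0 (map t (enum 'I_k) ++ map r (enum 'I_k)).

Lemma nth_map_enum (t : 'I_k -> T) (i : 'I_k) : nth x0 (map t (enum 'I_k)) i = t i.
Proof. by rewrite (nth_map i) ?size_enum_ord // nth_ord_enum. Qed.

Lemma scal_cat_l (t r : 'I_k -> T) (j : nat) :
  j < k -> scal_cat t r j = nth x0 (map t (enum 'I_k)) j.
Proof. by move=> ltjk; rewrite /scal_cat nth_cat size_map size_enum_ord ltjk. Qed.

Lemma scal_cat_r (t r : 'I_k -> T) (j : nat) :
  scal_cat t r (k + j) = nth x0 (map r (enum 'I_k)) j.
Proof. by rewrite /scal_cat nth_cat size_map size_enum_ord ltnNge leq_addr addKn. Qed.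

Lemma tup_scal_cat_l (t r : 'I_k -> T) : tup k (scal_cat t r) = t.
Proof.
by apply: functional_extensionality => i; rewrite /tup scal_cat_l ?nth_map_enum.
Qed.

Lemma tup_scal_cat_r (t r : 'I_k -> T) : tup k (fun j => scal_cat t r (k + j)) = r.
Proof.
by apply: functional_extensionality => i; rewrite /tup scal_cat_r nth_map_enum.
Qed.

End ScalarConcat.

Arguments scal_cat {T k} x0 t r.

Section AbsorbHead.
Variables (R M : Type) (n : nat) (oneR : R) (g' : ('I_n -> R) -> R)
  (g : ('I_n.-1 -> R) -> M -> M -> Prop).

(* (g'(t_1, ..., t_(n-1), r_1), r_2, ..., r_(n-1)) *)
Definition absorb_head (t r : 'I_n.-1 -> R) : 'I_n.-1 -> R :=
  ins_scal n g' 0 (scal_cat oneR t r).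

Lemma absorb_head_tail (t r : 'I_n.-1 -> R) (i : 'I_n.-1) :
  nat_of_ord i != 0 -> absorb_head t r i = r i.
Proof.
move=> /negbTE i_neq0.
rewrite /absorb_head /ins_scal /tup /ins_op /ins ltn0 i_neq0.
have -> : (i + n).-1 = n.-1 + i by move: (ltn_ord i); lia.
by rewrite scal_cat_r nth_map_enum.
Qed.

Lemma absorb_head_scal1 (t r : 'I_n.-1 -> R) (i : 'I_n.-1) :
  nat_of_ord i = 0 ->
  absorb_head t (scal1 n oneR (r i)) = scal1 n oneR (absorb_head t r i).
Proof.
move=> i0; apply: functional_extensionality => j.
rewrite /absorb_head /ins_scal /tup /ins_op /ins /scal1 /upd /const_tup ltn0 i0 /=.
case: eqP => [_ | j_neq0]; last first.
  have -> : (j + n).-1 = n.-1 + j by move: (ltn_ord j); lia.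
  by rewrite scal_cat_r nth_map_enum /scal1 /upd /const_tup; case: eqP.
congr g'; apply: functional_extensionality => k; rewrite /tup add0n.
have [ltk | gek] := ltnP k n.-1; first by rewrite !scal_cat_l.
have -> : nat_of_ord k = n.-1 + i by move: gek (ltn_ord k); lia.
by rewrite !scal_cat_r !nth_map_enum /scal1 /upd /const_tup i0.
Qed.

Hypothesis n_gt1 : 1 < n.
Hypothesis g_assoc : forall (s : nat -> R) (i : nat), i < n.-1 -> forall x : M,
  seteq (g (ins_scal n g' i s) x)
        (glift g (tup n.-1 s) (g (tup n.-1 (fun k => s (n.-1 + k))) x)).

Lemma g_absorb_head (t r : 'I_n.-1 -> R) (x : M) :
  seteq (g (absorb_head t r) x) (glift g t (g r x)).
Proof.
have n1_gt0 : 0 < n.-1 by rewrite ltn_predRL.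
by have := g_assoc (scal_cat oneR t r) 0 n1_gt0 x; rewrite tup_scal_cat_l tup_scal_cat_r.
Qed.

End AbsorbHead.

Arguments absorb_head {R n} oneR g' t r.
Arguments absorb_head_tail {R n} oneR g' t r {i}.

Section WeaklyClassicalPrime.
Variables (R M : Type) (m n : nat) (zR oneR : R) (g' : ('I_n -> R) -> R)
  (f : hop M m) (g : ('I_n.-1 -> R) -> M -> M -> Prop) (zM : M) (Q : M -> Prop).
Hypothesis n_gt1 : 1 < n.
Hypothesis g_assoc : forall (s : nat -> R) (i : nat), i < n.-1 -> forall x : M,
  seteq (g (ins_scal n g' i s) x)
        (glift g (tup n.-1 s) (g (tup n.-1 (fun k => s (n.-1 + k))) x)).
Hypothesis g_zero : forall (r : 'I_n.-1 -> R) (i : 'I_n.-1) (x : M),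
  seteq (g (upd r i zR) x) (eq zM).
Hypothesis Q_wcp : weakly_classical_prime m n oneR f g zM Q.

Let n1_gt0 : 0 < n.-1. Proof. by rewrite ltn_predRL. Qed.
Let ord0' : 'I_n.-1 := Ordinal n1_gt0.

Lemma Q_closed (r : 'I_n.-1 -> R) (x : M) : Q x -> subs (g r x) Q.
Proof. by case: Q_wcp => -[_ _ _ g_closed] _ _; apply: g_closed. Qed.

Lemma Qset_sub (X : M -> Prop) (s : R) : subs X Q -> Qset n oneR g Q X s.
Proof. by move=> XQ y [x [Xx gxy]]; apply: Q_closed x (XQ x Xx) y gxy. Qed.

Lemma Q_zero : Q zM.
Proof.
case: Q_wcp => -[[x Qx] _ _ _] _ _.
by apply: (Q_closed (upd (const_tup n.-1 oneR) 0 zR) x Qx zM); apply/(g_zero _ ord0').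
Qed.

Lemma Qset_zero (X : M -> Prop) : Qset n oneR g Q X zR.
Proof. by move=> y [x [_ /(g_zero _ ord0') <-]]; apply: Q_zero. Qed.

Lemma Qset_cover (r : 'I_n.-1 -> R) (a : M) (s : R) :
  Qset n oneR g Q (g r a) s ->
  Fset n zR oneR g zM (g r a) s \/
  exists i : 'I_n.-1, Qset n oneR g Q (g (scal1 n oneR (r i)) a) s.
Proof.
move=> s_in_Q.
have [-> | s_neq0] := classic (s = zR); first by right; exists ord0'; apply: Qset_zero.
have [zero_in | zero_notin] := classic (glift g (scal1 n oneR s) (g r a) zM).
  by left; split.
right.
have absorbE := @g_absorb_head R M n oneR g' g n_gt1 g_assoc (scal1 n oneR s).
have [i Qi] : exists i,
    subs (g (scal1 n oneR (absorb_head oneR g' (scal1 n oneR s) r i)) a) Q.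
  case: Q_wcp => _ _; apply.
    by move/(absorbE r a zM).
  by move=> y /(absorbE r a y); apply: s_in_Q.
exists i; have [i0 | i_neq0] := eqVneq (nat_of_ord i) 0.
  move=> y /(absorbE (scal1 n oneR (r i)) a y).
  by rewrite absorb_head_scal1 //; apply: Qi.
by apply: Qset_sub; rewrite -(absorb_head_tail oneR g' (scal1 n oneR s) r i_neq0).
Qed.

End WeaklyClassicalPrime.

Theorem mainTheorem9 (R M : Type) (m n : nat)
    (f' : hop R m) (g' : ('I_n -> R) -> R) (zR oneR : R)
    (f : hop M m) (g : ('I_n.-1 -> R) -> M -> M -> Prop) (zM : M)
    (Q : M -> Prop) :
  2 <= m -> 2 <= n ->
  krasner_hyperring m n f' g' zR oneR ->
  hypermodule m n f' g' zR oneR f g zM ->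
  weakly_classical_prime m n oneR f g zM Q ->
  forall (r : 'I_n.-1 -> R) (a : M),
    subs (Qset n oneR g Q (g r a))
         (fun s => Fset n zR oneR g zM (g r a) s \/
                   exists i : 'I_n.-1, Qset n oneR g Q (g (scal1 n oneR (r i)) a) s).
Proof.
move=> _ n_gt1 _ [_ [_ [_ [_ [g_assoc [g_zero _]]]]]] Q_wcp r a s.
exact: Qset_cover n_gt1 g_assoc g_zero Q_wcp r a s.
Qed.
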